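(* Let $w\in S_n$ and $1\le p<q\le n$, and let $\mathcal{S}_{w,pq}=K_{pq}.F_w\subset Fl_n(\mathbb{H})$, where $F_w=(\mathbb{H}e_{w(1)},\ldots,\mathbb{H}e_{w(n)})$. The group $G=(\mathbb{H}^* )^n=\{\mathrm{Diag}(\gamma_1,\ldots,\gamma_n):\gamma_\nu\in\mathbb{H}\setminus\{0\}\}$ acts transitively on the complement in $\mathcal{S}_{w,pq}$ of its two $K$-fixed points $F_w$ and $F_{s_{pq}w}$, and there is a point of this complement whose stabilizer in $G$ is $G_{pq}=\{(\gamma_1,\ldots,\gamma_n)\in G:\gamma_p=\gamma_q\}$.
   Context: $\mathbb{H}^n$ is a left $\mathbb{H}$-module with standard basis $e_1,\ldots,e_n$ and inner product $(h,k)=\sum_\nu h_\nu\bar k_\nu$; an invertible matrix $B$ acts $\mathbb{H}$-linearly by $h\mapsto h\cdot B^*$, hence acts on $Fl_n(\mathbb{H})$, the manifold of complete flags $V_1\subset\cdots\subset V_n$ of left $\mathbb{H}$-submodules with $\dim V_\nu=\nu$ (a flag given by mutually orthogonal lines $(L_1,\ldots,L_n)$ corresponds to $V_\nu=L_1\oplus\cdots\oplus L_\nu$). $K=Sp(1)^n$ is the diagonal subgroup of $Sp(n)=\{B:BB^*=I\}$; $K_{pq}\subset Sp(n)$ is the subgroup of matrices whose entries vanish except on the diagonal and at positions $(p,q)$, $(q,p)$. $s_{pq}$ is the transposition of $p,q$. *)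

From HB Require Import structures.
From mathcomp Require Import all_boot all_order all_algebra all_fingroup.
From mathcomp Require Import reals.
Set Implicit Arguments. Unset Strict Implicit. Unset Printing Implicit Defensive.
Import Order.TTheory GRing.Theory Num.Theory.
Local Open Scope ring_scope.

Section Quat.
Variable R : realType.

Record quat := Quat { qa : R; qb : R; qc : R; qd : R }.

Definition qzero : quat := Quat 0 0 0 0.
Definition qone : quat := Quat 1 0 0 0.
Definition qadd (x y : quat) : quat :=
  Quat (qa x + qa y) (qb x + qb y) (qc x + qc y) (qd x + qd y).
(* Hamilton product: i^2 = j^2 = k^2 = ijk = -1 *)
Definition qmul (x y : quat) : quat :=
  Quat (qa x * qa y - qb x * qb y - qc x * qc y - qd x * qd y)
       (qa x * qb y + qb x * qa y + qc x * qd y - qd x * qc y)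
       (qa x * qc y - qb x * qd y + qc x * qa y + qd x * qb y)
       (qa x * qd y + qb x * qc y - qc x * qb y + qd x * qa y).
Definition qconj (x : quat) : quat := Quat (qa x) (- qb x) (- qc x) (- qd x).
Definition qsum (I : finType) (f : I -> quat) : quat :=
  Quat (\sum_i qa (f i)) (\sum_i qb (f i)) (\sum_i qc (f i)) (\sum_i qd (f i)).

(** H^n (row vectors, a left H-module) *)
Definition hvec (n : nat) := 'I_n -> quat.
Definition hvec0 (n : nat) : hvec n := fun _ => qzero.

Definition lin_comb (n k : nat) (c : 'I_k -> quat) (v : 'I_k -> hvec n) : hvec n :=
  fun x => qsum (fun j => qmul (c j) (v j x)).

Definition has_dim (n : nat) (V : hvec n -> Prop) (k : nat) : Prop :=
  exists v : 'I_k -> hvec n,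
    (forall c : 'I_k -> quat, lin_comb c v = @hvec0 n -> forall j, c j = qzero) /\
    (forall h, V h <-> exists c, h = lin_comb c v).

(** Complete flags: F i is V_{i+1} (0-indexed), dim V_{i+1} = i+1, nested. *)
Definition flag (n : nat) := 'I_n -> (hvec n -> Prop).
Definition is_flag (n : nat) (F : flag n) : Prop :=
  (forall i : 'I_n, has_dim (F i) i.+1) /\
  (forall i j : 'I_n, (i <= j)%N -> forall h, F i h -> F j h).

Definition qmat (n : nat) := 'I_n -> 'I_n -> quat.
Definition qadj (n : nat) (B : qmat n) : qmat n := fun i j => qconj (B j i).
Definition qmatmul (n : nat) (A B : qmat n) : qmat n :=
  fun i j => qsum (fun k => qmul (A i k) (B k j)).
Definition qid (n : nat) : qmat n := fun i j => if i == j then qone else qzero.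

Definition in_Sp (n : nat) (B : qmat n) : Prop := qmatmul B (qadj B) = @qid n.

Definition in_K (n : nat) (B : qmat n) : Prop :=
  in_Sp B /\ forall i j : 'I_n, i != j -> B i j = qzero.

Definition in_Kpq (n : nat) (p q : 'I_n) (B : qmat n) : Prop :=
  in_Sp B /\ forall i j : 'I_n, i != j -> ~ ((i == p) && (j == q) || (i == q) && (j == p)) ->
    B i j = qzero.

(** action h |-> h . B^star, i.e. (h B^star)_j = sum_nu h_nu conj(B_{j nu}) *)
Definition act (n : nat) (B : qmat n) (h : hvec n) : hvec n :=
  fun j => qsum (fun nu => qmul (h nu) (qconj (B j nu))).
Definition act_flag (n : nat) (B : qmat n) (F : flag n) : flag n :=
  fun i h => exists h', F i h' /\ h = act B h'.

Definition Diag (n : nat) (g : 'I_n -> quat) : qmat n :=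
  fun i j => if i == j then g i else qzero.
Definition in_G (n : nat) (g : 'I_n -> quat) : Prop := forall i, g i <> qzero.

(** F_w = (H e_{w(1)}, ..., H e_{w(n)}): V_{i+1} = span(e_{w(0)},...,e_{w(i)}) *)
Definition Fw (n : nat) (w : 'I_n -> 'I_n) : flag n :=
  fun i h => forall x : 'I_n, (forall k : 'I_n, (k <= i)%N -> w k != x) -> h x = qzero.

Definition S_wpq (n : nat) (w : 'I_n -> 'I_n) (p q : 'I_n) : flag n -> Prop :=
  fun F => exists B, in_Kpq p q B /\ F = act_flag B (Fw w).

Definition K_fixed (n : nat) (F : flag n) : Prop :=
  forall B, in_K B -> act_flag B F = F.

End Quat.

From Pilot Require Import Defs.
From HB Require Import structures.
From mathcomp Require Import all_boot all_order all_algebra all_fingroup.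
From mathcomp Require Import reals ring lra.
From Stdlib Require Import FunctionalExtensionality PropExtensionality Classical_Prop.
Set Implicit Arguments. Unset Strict Implicit. Unset Printing Implicit Defensive.
Import Order.TTheory GRing.Theory Num.Theory.
Local Open Scope ring_scope.

(* Order p, q so that r p < r q, where r = w^-1 gives the position of a coordinate in F_w.
   A flag of S_{w,pq} = K_pq.F_w differs from F_w only in the steps V_i with
   r p <= i < r q: there V_i is spanned by the e_j with j <> p, q and r j <= i, together
   with the quaternionic line through x e_p + y e_q.  Hence S_{w,pq} is the projective line
   of the pairs [x : y] up to left scaling, with F_w = [1 : 0] and F_{s_pq w} = [0 : 1].
   Diag(gamma) acts by [x : y] |-> [x conj(gamma_p) : y conj(gamma_q)], which is transitive
   on the points with x, y <> 0, and fixes [1 : 1] exactly when gamma_p = gamma_q.  Every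
   element of K rescales the two poles, while Diag(1, .., -1, .., 1) moves all other points. *)

Section Quaternions.
Variable R : realType.
Local Notation quat := (quat R).
Local Notation q0 := (qzero R).
Local Notation q1 := (qone R).

Ltac quat_ring := rewrite /qmul /qadd /qconj /qzero /qone /=; congr Quat; ring.

Lemma qmulA (x y z : quat) : qmul (qmul x y) z = qmul x (qmul y z).
Proof. case: x y z => [? ? ? ?] [? ? ? ?] [? ? ? ?]; quat_ring. Qed.
Lemma qmul1l (x : quat) : qmul q1 x = x.
Proof. case: x => ? ? ? ?; quat_ring. Qed.
Lemma qmul1r (x : quat) : qmul x q1 = x.
Proof. case: x => ? ? ? ?; quat_ring. Qed.
Lemma qmul0l (x : quat) : qmul q0 x = q0.
Proof. case: x => ? ? ? ?; quat_ring. Qed.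
Lemma qmul0r (x : quat) : qmul x q0 = q0.
Proof. case: x => ? ? ? ?; quat_ring. Qed.
Lemma qadd0l (x : quat) : qadd q0 x = x.
Proof. case: x => ? ? ? ?; quat_ring. Qed.
Lemma qadd0r (x : quat) : qadd x q0 = x.
Proof. case: x => ? ? ? ?; quat_ring. Qed.
Lemma qconj0 : qconj q0 = q0.
Proof. quat_ring. Qed.
Lemma qconj1 : qconj q1 = q1.
Proof. quat_ring. Qed.
Lemma qconjK (x : quat) : qconj (qconj x) = x.
Proof. case: x => ? ? ? ?; quat_ring. Qed.

Lemma qconj_dot (a b c d : quat) :
  qconj (qadd (qmul a (qconj c)) (qmul b (qconj d))) =
  qadd (qmul c (qconj a)) (qmul d (qconj b)).
Proof. case: a b c d => [? ? ? ?] [? ? ? ?] [? ? ? ?] [? ? ? ?]; quat_ring. Qed.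

Lemma qdot2_combl (u v a b c d e f : quat) :
  qadd (qmul (qadd (qmul u a) (qmul v c)) (qconj e))
       (qmul (qadd (qmul u b) (qmul v d)) (qconj f)) =
  qadd (qmul u (qadd (qmul a (qconj e)) (qmul b (qconj f))))
       (qmul v (qadd (qmul c (qconj e)) (qmul d (qconj f)))).
Proof.
case: u v a b c d e f => [? ? ? ?] [? ? ? ?] [? ? ? ?] [? ? ? ?] [? ? ? ?] [? ? ? ?]
  [? ? ? ?] [? ? ? ?]; quat_ring.
Qed.

Definition qneg1 : quat := Quat (-1) 0 0 0.

Lemma qneg1_unit : qmul qneg1 (qconj qneg1) = q1.
Proof. quat_ring. Qed.

Lemma qmul_qneg1_fixed (y : quat) : qmul y (qconj qneg1) = y -> y = q0.
Proof.
case: y => a b c d; rewrite /qmul /qconj /qneg1 /qzero /= => -[ea eb ec ed].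
by congr Quat; lra.
Qed.

Definition qnorm2 (x : quat) : R := qa x ^+ 2 + qb x ^+ 2 + qc x ^+ 2 + qd x ^+ 2.
Definition qinv (x : quat) : quat :=
  Quat (qa x / qnorm2 x) (- qb x / qnorm2 x) (- qc x / qnorm2 x) (- qd x / qnorm2 x).

Lemma qnorm2_neq0 (x : quat) : x <> q0 -> qnorm2 x != 0.
Proof.
case: x => a b c d nz; apply/eqP => n0; apply: nz; rewrite /qnorm2 /= in n0.
by congr Quat; nra.
Qed.

Lemma qmulV (x : quat) : x <> q0 -> qmul x (qinv x) = q1.
Proof.
move=> /qnorm2_neq0; case: x => a b c d; rewrite /qinv /qmul /qone /qnorm2 /= => nz.
by congr Quat; field.
Qed.

Lemma qmulVl (x : quat) : x <> q0 -> qmul (qinv x) x = q1.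
Proof.
move=> /qnorm2_neq0; case: x => a b c d; rewrite /qinv /qmul /qone /qnorm2 /= => nz.
by congr Quat; field.
Qed.

Lemma qmulKV (a b : quat) : b <> q0 -> qmul (qmul a b) (qinv b) = a.
Proof. by move=> nz; rewrite qmulA qmulV // qmul1r. Qed.
Lemma qmulVK (a b : quat) : b <> q0 -> qmul (qmul a (qinv b)) b = a.
Proof. by move=> nz; rewrite qmulA qmulVl // qmul1r. Qed.

Lemma qmulI (x a b : quat) : x <> q0 -> qmul x a = qmul x b -> a = b.
Proof. by move=> nz e; rewrite -(qmul1l a) -(qmul1l b) -(qmulVl nz) !qmulA e. Qed.
Lemma qmulIr (x a b : quat) : x <> q0 -> qmul a x = qmul b x -> a = b.
Proof. by move=> nz e; rewrite -(qmulKV a nz) -(qmulKV b nz) e. Qed.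

Lemma qone_neq0 : q1 <> q0.
Proof. by case; apply/eqP; rewrite oner_neq0. Qed.
Lemma qmul_neq0 (x y : quat) : x <> q0 -> y <> q0 -> qmul x y <> q0.
Proof. by move=> nzx nzy e; apply: nzy; apply: (qmulI nzx); rewrite e qmul0r. Qed.
Lemma qinv_neq0 (x : quat) : x <> q0 -> qinv x <> q0.
Proof. by move=> nz e; apply: qone_neq0; rewrite -(qmulV nz) e qmul0r. Qed.
Lemma qconj_neq0 (x : quat) : x <> q0 -> qconj x <> q0.
Proof. by move=> nz e; apply: nz; rewrite -(qconjK x) e qconj0. Qed.

Lemma qsum_single n (f : 'I_n -> quat) j :
  (forall i, i != j -> f i = q0) -> qsum f = f j.
Proof.
move=> f0; rewrite /qsum; case fj: (f j) => [a b c d].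
by congr Quat; rewrite (bigD1 j) //= big1 ?addr0 ?fj // => i /f0 ->.
Qed.

Lemma qsum_pair n (f : 'I_n -> quat) j k : j != k ->
  (forall i, i != j -> i != k -> f i = q0) -> qsum f = qadd (f j) (f k).
Proof.
move=> jk f0; rewrite /qsum /qadd.
by congr Quat; rewrite (bigD1 j) //= (bigD1 k) 1?eq_sym //= big1 ?addr0 //;
  move=> i /andP [ik ij]; rewrite f0.
Qed.

End Quaternions.

Section Matrices.
Variables (R : realType) (n : nat).
Local Notation q0 := (qzero R).
Local Notation q1 := (qone R).

Lemma qmat_ext (A B : qmat R n) : (forall i j, A i j = B i j) -> A = B.
Proof. by move=> e; do 2 (apply: functional_extensionality => ?); apply: e. Qed.

Lemma act_Diag (g : 'I_n -> quat R) h j : Defs.act (Diag g) h j = qmul (h j) (qconj (g j)).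
Proof.
rewrite /Defs.act (qsum_single (j := j)) /Diag ?eqxx // => k kj.
by rewrite eq_sym (negbTE kj) qconj0 qmul0r.
Qed.

Lemma Diag_mul_adj (g : 'I_n -> quat R) i j :
  qmatmul (Diag g) (qadj (Diag g)) i j = if i == j then qmul (g i) (qconj (g i)) else q0.
Proof.
rewrite /qmatmul /qadj (qsum_single (j := i)) /Diag ?eqxx => [|k ki].
  by case: (eqVneq i j) => [-> | _]; rewrite ?qconj0 ?qmul0r.
by rewrite eq_sym (negbTE ki) qmul0l.
Qed.

Lemma in_K_Diag (g : 'I_n -> quat R) :
  (forall j, qmul (g j) (qconj (g j)) = q1) -> in_K (Diag g).
Proof.
move=> unit_g; split=> [|i j ij]; last by rewrite /Diag (negbTE ij).
by apply: qmat_ext => i j; rewrite Diag_mul_adj /qid; case: eqP => [->|].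
Qed.

Lemma in_K_DiagE (B : qmat R n) : in_K B -> B = Diag (fun j => B j j).
Proof. by case=> _ offdiag; apply: qmat_ext => i j; rewrite /Diag; case: eqVneq => [->|/offdiag]. Qed.

Lemma in_Sp_Diag_neq0 (g : 'I_n -> quat R) j : in_Sp (Diag g) -> g j <> q0.
Proof.
move=> /(congr1 (fun M => M j j)); rewrite Diag_mul_adj /qid eqxx => e gj0.
by apply: (@qone_neq0 R); rewrite -e gj0 qmul0l.
Qed.

Lemma in_K_Diag_neq0 (B : qmat R n) j : in_K B -> B j j <> q0.
Proof.
move=> KB; have [sp _] := KB; rewrite (in_K_DiagE KB) in sp.
exact: in_Sp_Diag_neq0 sp.
Qed.

Definition qblock (p q : 'I_n) (a b c d : quat R) : qmat R n := fun i j =>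
  if i == p then (if j == p then a else if j == q then b else q0)
  else if i == q then (if j == p then c else if j == q then d else q0)
  else qid R i j.

Lemma qblock_in_Kpq p q a b c d : p != q ->
  qadd (qmul a (qconj a)) (qmul b (qconj b)) = q1 ->
  qadd (qmul a (qconj c)) (qmul b (qconj d)) = q0 ->
  qadd (qmul c (qconj c)) (qmul d (qconj d)) = q1 ->
  in_Kpq p q (qblock p q a b c d).
Proof.
move=> pq rp pq_orth rq; set B := qblock p q a b c d.
have qp : q != p by rewrite eq_sym.
have Bout i j : i != p -> i != q -> B i j = qid R i j.
  by move=> ip iq; rewrite /B /qblock (negbTE ip) (negbTE iq).
have Bblock i j : (i == p) || (i == q) -> j != p -> j != q -> B i j = q0.
  by move=> /orP [] /eqP ->; rewrite /B /qblock ?eqxx ?(negbTE qp) => /negbTE -> /negbTE ->.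
have qidC i j : qconj (qid R i j) = qid R j i.
  by rewrite /qid eq_sym; case: eqP; rewrite ?qconj1 ?qconj0.
split=> [|i j ij nblock]; last first.
  rewrite /B /qblock /qid (negbTE ij).
  case: (eqVneq i p) => [ip|_]; [|case: (eqVneq i q) => [iq|_] //]; subst i.
    rewrite eq_sym (negbTE ij); case: eqP => // jq.
    by case: nblock; rewrite jq !eqxx.
  case: eqP => [jp|_]; last by rewrite eq_sym (negbTE ij).
  by case: nblock; rewrite jp !eqxx orbT.
apply: qmat_ext => i j; rewrite /qmatmul /qadj.
case: (boolP ((i == p) || (i == q))) => [ipq | /norP [ip iq]].
  rewrite (qsum_pair (j := p) (k := q)) // => [|k kp kq]; last by rewrite Bblock // qmul0l.
  case: (boolP ((j == p) || (j == q))) => [jpq | /norP [jp jq]].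
    case/orP: ipq => /eqP ->; case/orP: jpq => /eqP ->;
      rewrite /B /qblock /qid !eqxx ?(negbTE qp) ?(negbTE pq) //.
    by rewrite -qconj_dot pq_orth qconj0.
  rewrite (Bout _ p jp jq) (Bout _ q jp jq) /qid (negbTE jp) (negbTE jq) qconj0 !qmul0r qadd0r.
  by case/orP: ipq => /eqP ->; rewrite eq_sym ?(negbTE jp) ?(negbTE jq).
rewrite (qsum_single (j := i)) => [|k ki]; last by rewrite Bout // /qid eq_sym (negbTE ki) qmul0l.
rewrite Bout // /qid eqxx qmul1l.
case: (boolP ((j == p) || (j == q))) => [jpq | /norP [jp jq]]; last by rewrite Bout // qidC.
by rewrite Bblock // qconj0; case/orP: jpq => /eqP ->; rewrite ?(negbTE ip) ?(negbTE iq).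
Qed.

End Matrices.

Lemma flag_ext (R : realType) n (F G : flag R n) : (forall i h, F i h <-> G i h) -> F = G.
Proof.
move=> e; do 2 (apply: functional_extensionality => ?).
exact: propositional_extensionality.
Qed.

Lemma Fw_perm (R : realType) n (v : 'S_n) i (h : hvec R n) :
  Fw (fun k => v k) i h <-> forall x, (i < (v^-1)%g x)%N -> h x = qzero R.
Proof.
have notin x : (forall k : 'I_n, (k <= i)%N -> v k != x) <-> (i < (v^-1)%g x)%N.
  split=> [vx | lt k ki].
    by rewrite ltnNge; apply/negP => /vx; rewrite permKV eqxx.
  by apply: contraTneq lt => <-; rewrite permK -leqNgt.
by rewrite /Fw; split=> h0 x /notin /h0.
Qed.

Section LineFlags.
Variables (R : realType) (n : nat) (w : 'S_n) (p q : 'I_n).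
Hypotheses (pq : p != q) (r_pq : ((w^-1)%g p < (w^-1)%g q)%N).
Local Notation quat := (quat R).
Local Notation q0 := (qzero R).
Local Notation q1 := (qone R).
Local Notation r j := (nat_of_ord ((w^-1)%g j)).
Local Notation S := (S_wpq (R := R) (fun k => w k) p q).
Local Notation Fa := (Fw (R := R) (fun k => w k)).
Local Notation Fb := (Fw (R := R) (fun k => tperm p q (w k))).

Fact neq_qp : q != p. Proof. by rewrite eq_sym. Qed.

Definition line_flag (x y : quat) : flag R n := fun i h =>
  if (r p <= i < r q)%N then
    (forall j, j != p -> j != q -> (i < r j)%N -> h j = q0) /\
    exists t, h p = qmul t x /\ h q = qmul t y
  else forall j, (i < r j)%N -> h j = q0.

Lemma out_range_ltn_rq i : ~~ (r p <= i < r q)%N -> (i < r q)%N = (i < r p)%N.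
Proof.
move=> nr; apply/idP/idP => [iq | ip]; last exact: ltn_trans ip r_pq.
by rewrite ltnNge; apply/negP => pi; rewrite pi iq in nr.
Qed.

Lemma out_range_vanish_pq i (g : hvec R n) j : ~~ (r p <= i < r q)%N ->
  (forall k, (i < r k)%N -> g k = q0) -> (j == p) || (j == q) -> (i < r j)%N ->
  g p = q0 /\ g q = q0.
Proof.
move=> outside g0 /orP [] /eqP -> lt; last rewrite out_range_ltn_rq // in lt;
  by split; apply: (g0) => //; exact: ltn_trans lt r_pq.
Qed.

Lemma Fw_line_flag : Fw (fun k => w k) = line_flag q1 q0.
Proof.
apply: flag_ext => i h; rewrite Fw_perm /line_flag.
case: ifP => [/andP [pi iq] | //].
split=> [h0 | [h0 [t [hp hq]]] j lt].
  split=> [j _ _ |]; first exact: h0.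
  by exists (h p); rewrite qmul1r qmul0r; split=> //; apply: h0.
have [ejp | jp] := eqVneq j p; first by rewrite ejp ltnNge pi in lt.
have [-> | jq] := eqVneq j q; first by rewrite hq qmul0r.
exact: h0.
Qed.

Lemma Fw_tperm_line_flag : Fw (fun k => tperm p q (w k)) = line_flag q0 q1.
Proof.
have -> : (fun k => tperm p q (w k)) = (fun k => (w * tperm p q)%g k).
  by apply: functional_extensionality => k; rewrite permM.
have rk x : ((w * tperm p q)^-1)%g x = (w^-1)%g (tperm p q x).
  by rewrite invMg permM tpermV.
apply: flag_ext => i h; rewrite Fw_perm /line_flag.
transitivity (forall x, (i < r (tperm p q x))%N -> h x = q0).
  by split=> h0 x; [rewrite -rk | rewrite rk]; apply: h0.
case: ifP => [/andP [pi iq] | /negbT nr].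
  split=> [h0 | [h0 [t [hp hq]]] j].
    split=> [j jp jq lt |]; first by apply: h0; rewrite tpermD // eq_sym.
    by exists (h q); rewrite qmul1r qmul0r h0 // tpermL.
  have [-> | jp] := eqVneq j p; first by rewrite hp qmul0r.
  have [-> | jq] := eqVneq j q; first by rewrite tpermR ltnNge pi.
  by rewrite tpermD 1?eq_sym //; apply: h0.
have rk_out x : (i < r (tperm p q x))%N = (i < r x)%N.
  have [-> | xp] := eqVneq x p; first by rewrite tpermL out_range_ltn_rq.
  have [-> | xq] := eqVneq x q; first by rewrite tpermR out_range_ltn_rq.
  by rewrite tpermD 1?eq_sym.
by split=> h0 x; [rewrite -rk_out | rewrite rk_out]; apply: h0.
Qed.

Section KpqAction.
Variable B : qmat R n.
Hypothesis HB : in_Kpq p q B.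

Lemma in_Kpq_out j k : j != p -> j != q -> k != j -> B j k = q0.
Proof.
by move=> jp jq kj; apply: HB.2; [rewrite eq_sym | rewrite (negbTE jp) (negbTE jq)].
Qed.

Lemma in_Kpq_block i k : (i == p) || (i == q) -> k != p -> k != q -> B i k = q0.
Proof.
move=> ipq kp kq; apply: HB.2; last by rewrite (negbTE kp) (negbTE kq) !andbF.
by case/orP: ipq => /eqP ->; rewrite eq_sym.
Qed.

Lemma act_Kpq_out h j : j != p -> j != q -> Defs.act B h j = qmul (h j) (qconj (B j j)).
Proof.
move=> jp jq; rewrite /Defs.act (qsum_single (j := j)) // => k kj.
by rewrite in_Kpq_out // qconj0 qmul0r.
Qed.

Lemma act_Kpq_block h i : (i == p) || (i == q) ->
  Defs.act B h i = qadd (qmul (h p) (qconj (B i p))) (qmul (h q) (qconj (B i q))).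
Proof.
move=> ipq; rewrite /Defs.act (qsum_pair pq) // => k kp kq.
by rewrite in_Kpq_block // qconj0 qmul0r.
Qed.

Lemma in_Kpq_dot i j : qsum (fun k => qmul (B i k) (qconj (B j k))) = qid R i j.
Proof. exact: (congr1 (fun M : qmat R n => M i j) HB.1). Qed.

Lemma in_Kpq_unit_out j : j != p -> j != q -> qmul (B j j) (qconj (B j j)) = q1.
Proof.
move=> jp jq; have := in_Kpq_dot j j.
rewrite /qid eqxx (qsum_single (j := j)) // => k kj.
by rewrite in_Kpq_out // qmul0l.
Qed.

Lemma in_Kpq_block_dot i j : (i == p) || (i == q) ->
  qadd (qmul (B i p) (qconj (B j p))) (qmul (B i q) (qconj (B j q))) = qid R i j.
Proof.
move=> ipq; rewrite -in_Kpq_dot (qsum_pair pq) // => k kp kq.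
by rewrite in_Kpq_block // qmul0l.
Qed.

Lemma in_Kpq_row_p : qadd (qmul (B p p) (qconj (B p p))) (qmul (B p q) (qconj (B p q))) = q1.
Proof. by rewrite in_Kpq_block_dot ?eqxx // /qid eqxx. Qed.

Lemma in_Kpq_row_q : qadd (qmul (B q p) (qconj (B q p))) (qmul (B q q) (qconj (B q q))) = q1.
Proof. by rewrite in_Kpq_block_dot ?eqxx ?orbT // /qid eqxx. Qed.

Lemma in_Kpq_rows_orth :
  qadd (qmul (B p p) (qconj (B q p))) (qmul (B p q) (qconj (B q q))) = q0.
Proof. by rewrite in_Kpq_block_dot ?eqxx // /qid (negbTE pq). Qed.

Lemma in_Kpq_col_neq0 : B p p <> q0 \/ B q p <> q0.
Proof.
case: (classic (B p p = q0)) => [pp0 |]; [right=> qp0 | by left].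
have := in_Kpq_row_p; rewrite pp0 qmul0l qadd0l => rp.
have := in_Kpq_row_q; rewrite qp0 qmul0l qadd0l => rq.
have Bpq_neq0 : B p q <> q0 by move=> e; move: rp; rewrite e qmul0l => /esym /qone_neq0.
have Bqq0 : qconj (B q q) = q0.
  by apply: (qmulI Bpq_neq0); rewrite qmul0r -in_Kpq_rows_orth pp0 qmul0l qadd0l.
by apply: (@qone_neq0 R); rewrite -rq Bqq0 qmul0r.
Qed.

Definition rmul_Kpq (h : hvec R n) : hvec R n := fun j =>
  if j == p then qadd (qmul (h p) (B p p)) (qmul (h q) (B q p))
  else if j == q then qadd (qmul (h p) (B p q)) (qmul (h q) (B q q))
  else qmul (h j) (B j j).

Lemma act_Kpq_rmul h : Defs.act B (rmul_Kpq h) = h.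
Proof.
apply: functional_extensionality => j; rewrite /rmul_Kpq.
have [-> | jp] := eqVneq j p.
  rewrite act_Kpq_block ?eqxx //= ?eqxx (negbTE neq_qp) ?eqxx qdot2_combl.
  by rewrite in_Kpq_row_p -qconj_dot in_Kpq_rows_orth qconj0 qmul0r qadd0r qmul1r.
have [-> | jq] := eqVneq j q.
  rewrite act_Kpq_block ?eqxx ?orbT //= ?eqxx (negbTE neq_qp) ?eqxx qdot2_combl.
  by rewrite in_Kpq_row_q in_Kpq_rows_orth qmul0r qadd0l qmul1r.
by rewrite act_Kpq_out //= (negbTE jp) (negbTE jq) qmulA in_Kpq_unit_out // qmul1r.
Qed.

Lemma act_Kpq_line_flag_inside (i : 'I_n) h : (r p <= i < r q)%N ->
  act_flag B (line_flag q1 q0) i h <-> line_flag (qconj (B p p)) (qconj (B q p)) i h.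
Proof.
move=> inside; rewrite /act_flag /line_flag inside.
split=> [[h' [[h'0 [t [hp hq]]] ->]] | [h0 [t [hp hq]]]].
  rewrite qmul1r in hp; rewrite qmul0r in hq.
  split=> [j jp jq lt |]; first by rewrite act_Kpq_out // h'0 // qmul0l.
  by exists t; rewrite !act_Kpq_block ?eqxx ?orbT // hp hq !qmul0l !qadd0r.
(* Not [rmul_Kpq h]: checking that it lies in the step would need [B^* B = 1]. *)
exists (fun j => if j == p then t else if j == q then q0 else qmul (h j) (B j j)); split.
  split=> [j jp jq lt |]; first by rewrite (negbTE jp) (negbTE jq) h0 // qmul0l.
  by exists t; rewrite eqxx (negbTE neq_qp) eqxx qmul1r qmul0r.
apply: functional_extensionality => j.
have [-> | jp] := eqVneq j p.
  by rewrite act_Kpq_block ?eqxx //= ?eqxx (negbTE neq_qp) ?eqxx qmul0l qadd0r hp.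
have [-> | jq] := eqVneq j q.
  by rewrite act_Kpq_block ?eqxx ?orbT //= ?eqxx (negbTE neq_qp) ?eqxx qmul0l qadd0r hq.
by rewrite act_Kpq_out //= (negbTE jp) (negbTE jq) qmulA in_Kpq_unit_out // qmul1r.
Qed.

Lemma act_Kpq_line_flag_outside (i : 'I_n) h : ~~ (r p <= i < r q)%N ->
  act_flag B (line_flag q1 q0) i h <-> line_flag (qconj (B p p)) (qconj (B q p)) i h.
Proof.
move=> outside; rewrite /act_flag /line_flag (negbTE outside).
split=> [[h' [h'0 ->]] j lt | h0].
  case: (boolP ((j == p) || (j == q))) => [jpq | /norP [jp jq]].
    rewrite act_Kpq_block //; case: (out_range_vanish_pq outside h'0 jpq lt) => -> ->.
    by rewrite !qmul0l qadd0l.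
  by rewrite act_Kpq_out // h'0 // qmul0l.
exists (rmul_Kpq h); split; last by rewrite act_Kpq_rmul.
move=> j lt; rewrite /rmul_Kpq.
case: (boolP ((j == p) || (j == q))) => [jpq | /norP [jp jq]].
  case: (out_range_vanish_pq outside h0 jpq lt) => -> ->; rewrite !qmul0l qadd0l.
  by case/orP: jpq => /eqP ->; rewrite ?eqxx ?(negbTE neq_qp) ?eqxx.
by rewrite (negbTE jp) (negbTE jq) h0 // qmul0l.
Qed.

Lemma act_Kpq_line_flag :
  act_flag B (line_flag q1 q0) = line_flag (qconj (B p p)) (qconj (B q p)).
Proof.
apply: flag_ext => i h; case: (boolP (r p <= i < r q)%N).
  exact: act_Kpq_line_flag_inside.
exact: act_Kpq_line_flag_outside.
Qed.

End KpqAction.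

Lemma line_flag_scale t x y : t <> q0 -> line_flag (qmul t x) (qmul t y) = line_flag x y.
Proof.
move=> t0; apply: flag_ext => i h; rewrite /line_flag; case: ifP => // _.
split=> -[h0 [s [hp hq]]]; split=> //.
  by exists (qmul s t); rewrite hp hq !qmulA.
by exists (qmul s (qinv t)); rewrite hp hq !qmulA -!(qmulA (qinv t)) qmulVl // !qmul1l.
Qed.

Lemma line_flag_inj x y x' y' :
  line_flag x y = line_flag x' y' -> exists t, x' = qmul t x /\ y' = qmul t y.
Proof.
pose h j := if j == p then x' else if j == q then y' else q0.
have r_p_inside : (r p <= (w^-1)%g p < r q)%N by rewrite leqnn r_pq.
have : line_flag x' y' ((w^-1)%g p) h.
  rewrite /line_flag r_p_inside; split.
    by move=> j jp jq _; rewrite /h (negbTE jp) (negbTE jq).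
  by exists q1; rewrite /h eqxx (negbTE neq_qp) eqxx !qmul1l.
move=> + e; rewrite -e /line_flag r_p_inside => -[_ [t]].
by rewrite /h eqxx (negbTE neq_qp) eqxx; exists t.
Qed.

Lemma line_flag_eqP x y x' y' : x' <> q0 \/ y' <> q0 ->
  line_flag x y = line_flag x' y' <-> exists t, t <> q0 /\ x' = qmul t x /\ y' = qmul t y.
Proof.
move=> nz; split=> [/line_flag_inj [t [ex ey]] | [t [t0 [-> ->]]]]; last first.
  by rewrite line_flag_scale.
exists t; split=> // t0; rewrite t0 !qmul0l in ex ey.
by case: nz => nz; apply: nz.
Qed.

Lemma line_flag_eq10 x y : x <> q0 \/ y <> q0 -> line_flag x y = line_flag q1 q0 <-> y = q0.
Proof.
move=> nz; rewrite line_flag_eqP; last by left; apply: qone_neq0.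
split=> [[t [t0 [_ ty]]] | y0].
  by apply: (qmulI t0); rewrite -ty qmul0r.
have x0 : x <> q0 by case: nz => // /(_ y0).
by exists (qinv x); rewrite qmulVl // y0 qmul0r; split=> //; apply: qinv_neq0.
Qed.

Lemma line_flag_eq01 x y : x <> q0 \/ y <> q0 ->
  line_flag x y = line_flag q0 q1 <-> x = q0.
Proof.
move=> nz; rewrite line_flag_eqP; last by right; apply: qone_neq0.
split=> [[t [t0 [tx _]]] | x0].
  by apply: (qmulI t0); rewrite -tx qmul0r.
have y0 : y <> q0 by case: nz => // /(_ x0).
by exists (qinv y); rewrite qmulVl // x0 qmul0r; split=> //; apply: qinv_neq0.
Qed.

Lemma act_Diag_line_flag (g : 'I_n -> quat) x y : in_G g ->
  act_flag (Diag g) (line_flag x y) = line_flag (qmul x (qconj (g p))) (qmul y (qconj (g q))).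
Proof.
move=> g0; have cg0 j : qconj (g j) <> q0 by apply: qconj_neq0.
have act_inv h : Defs.act (Diag g) (fun j => qmul (h j) (qinv (qconj (g j)))) = h.
  by apply: functional_extensionality => j; rewrite act_Diag qmulVK.
apply: flag_ext => i h; rewrite /act_flag /line_flag; case: ifP => _.
  split=> [[h' [[h'0 [t [hp hq]]] ->]] | [h0 [t [hp hq]]]].
    split=> [j jp jq lt |]; first by rewrite act_Diag h'0 // qmul0l.
    by exists t; rewrite !act_Diag hp hq !qmulA.
  exists (fun j => qmul (h j) (qinv (qconj (g j)))); split; last by rewrite act_inv.
  split=> [j jp jq lt |]; first by rewrite h0 // qmul0l.
  by exists t; rewrite hp hq -!qmulA !qmulKV.
split=> [[h' [h'0 ->]] j lt | h0]; first by rewrite act_Diag h'0 // qmul0l.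
exists (fun j => qmul (h j) (qinv (qconj (g j)))); split; last by rewrite act_inv.
by move=> j lt; rewrite h0 // qmul0l.
Qed.

Lemma K_fixed_line_flag10 : K_fixed (line_flag q1 q0).
Proof.
move=> B KB; rewrite (in_K_DiagE KB) act_Diag_line_flag => [|j]; last exact: in_K_Diag_neq0.
by rewrite qmul1l qmul0l line_flag_eq10 //; left; apply/qconj_neq0/in_K_Diag_neq0.
Qed.

Lemma K_fixed_line_flag01 : K_fixed (line_flag q0 q1).
Proof.
move=> B KB; rewrite (in_K_DiagE KB) act_Diag_line_flag => [|j]; last exact: in_K_Diag_neq0.
by rewrite qmul1l qmul0l line_flag_eq01 //; right; apply/qconj_neq0/in_K_Diag_neq0.
Qed.

Lemma K_fixed_line_flag x y : x <> q0 \/ y <> q0 ->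
  K_fixed (line_flag x y) <-> y = q0 \/ x = q0.
Proof.
move=> nz; split=> [Kfix | [y0 | x0]]; last first.
- by rewrite (proj2 (line_flag_eq01 nz) x0); apply: K_fixed_line_flag01.
- by rewrite (proj2 (line_flag_eq10 nz) y0); apply: K_fixed_line_flag10.
(* Multiplying the [q]-th coordinate by the unit [-1] moves every non-pole point. *)
pose g j := if j == q then qneg1 R else q1.
have g_unit j : qmul (g j) (qconj (g j)) = q1.
  by rewrite /g; case: ifP; rewrite ?qneg1_unit ?qconj1 ?qmul1l.
have gG : in_G g by move=> j; exact: in_Sp_Diag_neq0 (in_K_Diag g_unit).1.
have := Kfix _ (in_K_Diag g_unit); rewrite act_Diag_line_flag // /g eqxx (negbTE pq).
rewrite qconj1 qmul1r => /line_flag_eqP -[//| t [t0 [xt yt]]].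
case: (classic (x = q0)) => [-> | x0]; [by right | left].
have t1 : t = q1 by apply: (qmulIr x0); rewrite qmul1l -xt.
by apply: qmul_qneg1_fixed; rewrite [RHS]yt t1 qmul1l.
Qed.

Lemma act_Diag_line_flag_diag_eq (g : 'I_n -> quat) x : in_G g -> x <> q0 ->
  act_flag (Diag g) (line_flag x x) = line_flag x x <-> g p = g q.
Proof.
move=> gG x0; rewrite act_Diag_line_flag // line_flag_eqP; last by left.
split=> [[t [t0 [xp xq]]] | ->].
  apply: (can_inj (@qconjK R)); apply: (qmulI x0); apply: (qmulI t0).
  by rewrite -xp -xq.
set z := qmul x (qconj (g q)).
have z0 : z <> q0 by apply: qmul_neq0 => //; apply: qconj_neq0.
exists (qmul x (qinv z)); rewrite qmulVK //; split=> //.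
by apply: qmul_neq0 => //; apply: qinv_neq0.
Qed.

Lemma line_flag_Diag_transitive x1 y1 x2 y2 :
  x1 <> q0 -> y1 <> q0 -> x2 <> q0 -> y2 <> q0 ->
  exists g, in_G g /\ act_flag (Diag g) (line_flag x1 y1) = line_flag x2 y2.
Proof.
move=> x10 y10 x20 y20.
pose g j := if j == p then qconj (qmul (qinv x1) x2)
            else if j == q then qconj (qmul (qinv y1) y2) else q1.
have gG : in_G g.
  move=> j; rewrite /g; case: ifP => _; [|case: ifP => _; last exact: qone_neq0];
    by apply/qconj_neq0/qmul_neq0 => //; apply: qinv_neq0.
exists g; split=> //; rewrite act_Diag_line_flag // /g eqxx (negbTE neq_qp) eqxx.
by rewrite !qconjK -!qmulA !qmulV // !qmul1l.
Qed.

Lemma S_wpq_line_flag F : S F -> exists x y, (x <> q0 \/ y <> q0) /\ F = line_flag x y.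
Proof.
case=> B [HB ->]; rewrite Fw_line_flag act_Kpq_line_flag //.
exists (qconj (B p p)), (qconj (B q p)); split=> //.
by case: (in_Kpq_col_neq0 HB) => nz; [left | right]; apply: qconj_neq0.
Qed.

Lemma S_wpq_line_flag_diag : exists2 x, x <> q0 & S (line_flag x x).
Proof.
(* [c = (1 + i)/2] has norm [1/2], so [[c, c; c, -c]] is unitary. *)
pose c : quat := Quat (1/2) (1/2) 0 0.
pose mc : quat := Quat (-(1/2)) (-(1/2)) 0 0.
have HB : in_Kpq p q (qblock p q c c c mc).
  by apply: qblock_in_Kpq => //; rewrite /qmul /qadd /qconj /qone /qzero /=; congr Quat; field.
exists (qconj c); first by apply: qconj_neq0 => -[c0]; lra.
exists (qblock p q c c c mc); split=> //.
by rewrite Fw_line_flag act_Kpq_line_flag // /qblock (negbTE neq_qp) !eqxx.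
Qed.

Lemma S_wpq_K_fixed F : S F -> K_fixed F <-> F = Fa \/ F = Fb.
Proof.
case/S_wpq_line_flag => x [y [nz ->]].
rewrite Fw_line_flag Fw_tperm_line_flag (line_flag_eq10 nz) (line_flag_eq01 nz).
exact: K_fixed_line_flag.
Qed.

Lemma S_wpq_Diag_transitive F1 F2 : S F1 -> S F2 ->
  F1 <> Fa -> F1 <> Fb -> F2 <> Fa -> F2 <> Fb ->
  exists g, in_G g /\ act_flag (Diag g) F1 = F2.
Proof.
move=> /S_wpq_line_flag [x1 [y1 [nz1 ->]]] /S_wpq_line_flag [x2 [y2 [nz2 ->]]].
rewrite Fw_line_flag Fw_tperm_line_flag.
rewrite (line_flag_eq10 nz1) (line_flag_eq01 nz1).
rewrite (line_flag_eq10 nz2) (line_flag_eq01 nz2) => y10 x10 y20 x20.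
exact: line_flag_Diag_transitive.
Qed.

Lemma S_wpq_Diag_stabilizer : exists F0, S F0 /\ F0 <> Fa /\ F0 <> Fb /\
  forall g, in_G g -> (act_flag (Diag g) F0 = F0 <-> g p = g q).
Proof.
have [x x0 Sx] := S_wpq_line_flag_diag.
have nz : x <> q0 \/ x <> q0 by left.
exists (line_flag x x); rewrite Fw_line_flag Fw_tperm_line_flag.
rewrite (line_flag_eq10 nz) (line_flag_eq01 nz).
by do 3 split=> //; move=> g gG; apply: act_Diag_line_flag_diag_eq.
Qed.

End LineFlags.

Lemma S_wpqC (R : realType) n (w : 'I_n -> 'I_n) (p q : 'I_n) :
  S_wpq (R := R) w q p = S_wpq w p q.
Proof.
apply: functional_extensionality => F; apply: propositional_extensionality.
have Kpq_sym a b B : in_Kpq (R := R) a b B -> in_Kpq b a B.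
  by case=> sp off; split=> // i j ij ab; apply: off => //; rewrite orbC.
by split=> -[B [HB ->]]; exists B; split=> //; apply: Kpq_sym.
Qed.

Theorem lemma3p3 (R : realType) (n : nat) (w : 'S_n) (p q : 'I_n) (hpq : (p < q)%N) :
  let S := S_wpq (R := R) (fun k => w k) p q in
  let Fa := Fw (R := R) (fun k => w k) in
  let Fb := Fw (R := R) (fun k => tperm p q (w k)) in
  (* F_w and F_{s_pq w} are exactly the K-fixed points of S_{w,pq} *)
  (forall F, S F -> (K_fixed F <-> F = Fa \/ F = Fb)) /\
  (* G acts transitively on S_{w,pq} \ {F_w, F_{s_pq w}} *)
  (forall F1 F2, S F1 -> S F2 -> F1 <> Fa -> F1 <> Fb -> F2 <> Fa -> F2 <> Fb ->
     exists g, in_G g /\ act_flag (Diag g) F1 = F2) /\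
  (* some point of the complement has stabilizer G_pq in G *)
  (exists F0, S F0 /\ F0 <> Fa /\ F0 <> Fb /\
     forall g, in_G g -> (act_flag (Diag g) F0 = F0 <-> g p = g q)).
Proof.
move=> S Fa Fb; rewrite {}/S {}/Fa {}/Fb.
have {hpq} pq : p != q by rewrite neq_ltn hpq.
(* Only [p != q] matters: the roles of [p] and [q] are fixed by their positions in [w]. *)
wlog r_pq : p q pq / ((w^-1)%g p < (w^-1)%g q)%N.
  move=> ordered; have [lt | gt | eq] := ltngtP ((w^-1)%g p) ((w^-1)%g q).
  - exact: ordered.
  - have qp : q != p by rewrite eq_sym.
    have := ordered q p qp gt; rewrite S_wpqC (tpermC q p).
    case=> Kfix [trans [F0 [S0 [Fa0 [Fb0 stab]]]]]; do 2 split=> //.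
    by exists F0; do 3 split=> //; move=> g gG; rewrite stab //; split=> ->.
  - by move: pq; rewrite (perm_inj (val_inj eq)) eqxx.
split; first exact: S_wpq_K_fixed.
split; first exact: S_wpq_Diag_transitive.
exact: S_wpq_Diag_stabilizer.
Qed.
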